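(* Let $L$ be a construction of an ASC-hypergraph $H$, let $Y\in L$ and put $Z=\bigcup H\setminus Y$. Then ${}_Z L$ is a construction of the ASC-hypergraph ${}_Z H$.
   Context: A hypergraph is a finite set $H$ of nonempty subsets of some finite set; its carrier is $\bigcup H$. For a family $F$ and set $Y$, $F_Y=\{X\in F\mid X\subseteq Y\}$, and ${}_Z F=\{X\cap Z\mid X\in F,\ X\cap Z\neq\emptyset\}$. A hypergraph partition of $H$ is a partition $\{H_1,\dots,H_n\}$ ($n\ge0$) of the set $H$ with $\{\bigcup H_1,\dots,\bigcup H_n\}$ a partition of $\bigcup H$; $H$ is connected if it has exactly one hypergraph partition; the finest hypergraph partition is the unique one whose blocks are connected. $H$ is atomic if $\{x\}\in H$ for all $x\in\bigcup H$; saturated if $X_1,X_2\in H$ with $X_1\cap X_2\neq\emptyset$ imply $X_1\cup X_2\in H$. An ASC-hypergraph is one that is atomic, saturated and connected. Constructions of an atomic $H$, by induction on $|\bigcup H|$: (0) $\emptyset$ is the only construction of $\emptyset$; (1) if $|\bigcup H|\ge1$, $H$ connected, $x\in\bigcup H$, $K$ a construction of $H_{\bigcup H\setminus\{x\}}$, then $K\cup\{\bigcup H\}$ is a construction of $H$; (2) if $H$ is not connected with finest hypergraph partition $\{H_1,\dots,H_n\}$, $n\ge2$, and $K_i$ is a construction of $H_i$, then $K_1\cup\dots\cup K_n$ is a construction of $H$. *)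

From mathcomp Require Import all_boot.
Set Implicit Arguments. Unset Strict Implicit. Unset Printing Implicit Defensive.

Section Hyper.
Variable T : finType.
Implicit Types (H F K : {set {set T}}) (Y Z : {set T}).

Definition hypergraph H : Prop := set0 \notin H.

Definition carrier H : {set T} := cover H.

Definition restr F Y : {set {set T}} := [set X in F | X \subset Y].

Definition trace Z F : {set {set T}} :=
  [set X :&: Z | X in [set X in F | X :&: Z != set0]].

Definition hpartition H (P : {set {set {set T}}}) : Prop :=
  partition P H /\
  (forall H1 H2, H1 \in P -> H2 \in P -> H1 != H2 ->
     [disjoint carrier H1 & carrier H2]).

Definition connected H : Prop :=
  exists P, hpartition H P /\ forall Q, hpartition H Q -> Q = P.

Definition finest_hpartition H (P : {set {set {set T}}}) : Prop :=
  hpartition H P /\ forall Hi, Hi \in P -> connected Hi.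

Definition atomic H : Prop := forall x, x \in carrier H -> [set x] \in H.

Definition saturated H : Prop :=
  forall X1 X2, X1 \in H -> X2 \in H -> X1 :&: X2 != set0 -> X1 :|: X2 \in H.

Definition ASC H : Prop := [/\ hypergraph H, atomic H, saturated H & connected H].

Inductive construction : {set {set T}} -> {set {set T}} -> Prop :=
| constr_empty : construction set0 set0
| constr_conn H x K :
    hypergraph H -> atomic H -> carrier H != set0 -> connected H ->
    x \in carrier H ->
    construction (restr H (carrier H :\ x)) K ->
    construction H (K :|: [set carrier H])
| constr_disc H (P : {set {set {set T}}}) (f : {set {set T}} -> {set {set T}}) :
    hypergraph H -> atomic H -> ~ connected H ->
    finest_hpartition H P -> 2 <= #|P| ->
    (forall Hi, Hi \in P -> construction Hi (f Hi)) ->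
    construction H (\bigcup_(Hi in P) f Hi).

End Hyper.

From mathcomp Require Import all_boot.
Set Implicit Arguments. Unset Strict Implicit. Unset Printing Implicit Defensive.

(* Tracing on Z preserves atomicity and saturation, and also connectedness, because a
   saturated connected hypergraph contains its carrier and then so does its trace.
   Tracing also commutes with both construction rules.  For rule (1), Y lies in the
   carrier of the smaller hypergraph, so the removed vertex x lies in Z and the traced
   top set is carrier H :&: Z.  For rule (2), Y comes from the construction of a single
   block; every other block has its carrier inside Z and is left untouched by the trace,
   and the nonempty traces of the blocks form the finest partition of the trace. *)

Lemma bigcup_setId (I T : finType) (D : {set I}) (c : pred I) (F : I -> {set T}) :
  (forall i, i \in D -> ~~ c i -> F i = set0) ->
  \bigcup_(i in [set i in D | c i]) F i = \bigcup_(i in D) F i.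
Proof.
move=> F0; rewrite [RHS](bigID c) /= [X in _ :|: X]big1 ?setU0.
  by apply: eq_bigl => i; rewrite inE.
by move=> i /andP [iD]; apply: F0.
Qed.

Section Hypergraphs.
Variable T : finType.
Implicit Types (H F K L B : {set {set T}}) (P Q : {set {set {set T}}}).
Implicit Types (A C X Y Z : {set T}).

Lemma carrierP F x : reflect (exists2 X, X \in F & x \in X) (x \in carrier F).
Proof. exact: bigcupP. Qed.

Lemma sub_carrier F X : X \in F -> X \subset carrier F.
Proof. exact: bigcup_sup. Qed.

Lemma carrierS F K : F \subset K -> carrier F \subset carrier K.
Proof.
move=> sFK; apply/bigcupsP => X XF; apply: sub_carrier; exact: subsetP XF.
Qed.

Lemma carrier_eq0 F : hypergraph F -> (carrier F == set0) = (F == set0).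
Proof.
move=> hF; apply/eqP/eqP => [eF0 | ->]; last by rewrite /carrier /cover big_set0.
apply/setP => X; rewrite in_set0; apply/negbTE; apply: contra hF => XF.
by have := sub_carrier XF; rewrite eF0 subset0 => /eqP <-.
Qed.

Lemma traceP Z F W :
  reflect (exists2 X, X \in F & X :&: Z != set0 /\ W = X :&: Z) (W \in trace Z F).
Proof.
apply: (iffP imsetP) => [[X] | [X XF [nz ->]]].
  by rewrite inE => /andP [XF nz] ->; exists X.
by exists X; rewrite ?inE ?XF.
Qed.

Lemma trace_hypergraph Z F : hypergraph (trace Z F).
Proof. by apply/negP => /traceP [X _ [+ e]]; rewrite -e eqxx. Qed.

Lemma carrier_trace Z F : carrier (trace Z F) = carrier F :&: Z.
Proof.
apply/setP => x; rewrite inE; apply/carrierP/andP.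
  by move=> [_ /traceP [X XF [_ ->]] /setIP [xX xZ]]; split => //; apply/carrierP; exists X.
move=> [/carrierP [X XF xX] xZ]; exists (X :&: Z); last by rewrite inE xX xZ.
by apply/traceP; exists X => //; split => //; apply/set0Pn; exists x; rewrite inE xX xZ.
Qed.

Lemma trace_eq0 Z F : (trace Z F == set0) = [disjoint carrier F & Z].
Proof. by rewrite -(carrier_eq0 (trace_hypergraph Z F)) carrier_trace setI_eq0. Qed.

Lemma trace_id Z F : hypergraph F -> carrier F \subset Z -> trace Z F = F.
Proof.
move=> hF sFZ; apply/setP => W.
have WZ X : X \in F -> X :&: Z = X by move=> XF; apply/setIidPl/(subset_trans (sub_carrier XF)).
apply/traceP/idP => [[X XF [_ ->]] | WF]; first by rewrite WZ.
by exists W; rewrite // WZ //; split => //; apply: contraNneq hF => <-.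
Qed.

Lemma traceU Z F K : trace Z (F :|: K) = trace Z F :|: trace Z K.
Proof. by rewrite /trace !setIdE setIUl imsetU. Qed.

Lemma trace0 Z : trace Z set0 = set0.
Proof. by apply/setP => W; rewrite in_set0; apply/negbTE/negP => /traceP [X]; rewrite in_set0. Qed.

Lemma trace_bigcup Z P (f : {set {set T}} -> {set {set T}}) :
  trace Z (\bigcup_(B in P) f B) = \bigcup_(B in P) trace Z (f B).
Proof. exact: (big_morph _ (traceU Z) (trace0 Z)). Qed.

Lemma trace_set1 Z X : X :&: Z != set0 -> trace Z [set X] = [set X :&: Z].
Proof.
move=> nz; rewrite /trace (_ : [set _ in _ | _] = [set X]) ?imset_set1 //.
by apply/setP => W; rewrite !inE; case: eqP => // ->.
Qed.

Lemma trace_atomic Z H : atomic H -> atomic (trace Z H).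
Proof.
move=> aH x; rewrite carrier_trace inE => /andP [xH xZ]; apply/traceP.
exists [set x]; first exact: aH.
have -> : [set x] :&: Z = [set x] by apply/setIidPl; rewrite sub1set.
by split; rewrite // -card_gt0 cards1.
Qed.

Lemma trace_saturated Z H : saturated H -> saturated (trace Z H).
Proof.
move=> sH _ _ /traceP [X1 X1H [_ ->]] /traceP [X2 X2H [_ ->]] /set0Pn [y].
rewrite !inE => /andP [/andP [yX1 yZ] /andP [yX2 _]].
apply/traceP; exists (X1 :|: X2).
  by apply: sH => //; apply/set0Pn; exists y; rewrite inE yX1 yX2.
by rewrite setIUl; split => //; apply/set0Pn; exists y; rewrite !inE yX1 yZ.
Qed.

Lemma restr_saturated H A : saturated H -> saturated (restr H A).
Proof.
move=> sH X1 X2; rewrite !inE => /andP [X1H X1A] /andP [X2H X2A] nz.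
by rewrite sH //= subUset X1A X2A.
Qed.

Lemma carrier_restr H A : carrier (restr H A) \subset A.
Proof. by apply/bigcupsP => X; rewrite inE => /andP []. Qed.

Lemma trace_restrD1 Z H x : x \in Z ->
  trace Z (restr H (carrier H :\ x)) = restr (trace Z H) (carrier (trace Z H) :\ x).
Proof.
move=> xZ; apply/setP => W; rewrite inE carrier_trace.
apply/traceP/andP => [[X] | [/traceP [X XH [nz ->]] sub]].
  rewrite inE => /andP [XH sXC] [nz ->]; split; first by apply/traceP; exists X.
  apply/subsetP => y; rewrite !inE => /andP [yX ->].
  by have := subsetP sXC y yX; rewrite !inE => /andP [-> ->].
exists X; rewrite // inE XH subsetD1 sub_carrier //=.
by apply: contraTN sub => xX; rewrite subsetD1 inE xX xZ andbF.
Qed.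

Lemma hpartition_cover H P : hpartition H P -> cover P = H.
Proof. by move=> [/and3P [/eqP]]. Qed.

Lemma hpartition_set0 H P : hpartition H P -> set0 \notin P.
Proof. by move=> [/and3P []]. Qed.

Lemma hpartition_block_sub H P B : hpartition H P -> B \in P -> B \subset H.
Proof. by move=> hP BP; rewrite -(hpartition_cover hP); apply: bigcup_sup. Qed.

Lemma hpartition_block_hypergraph H P B :
  hypergraph H -> hpartition H P -> B \in P -> hypergraph B.
Proof. by move=> hH hP BP; apply: contra hH; apply: subsetP (hpartition_block_sub hP BP) _. Qed.

Lemma hpartition_block_eq H P B1 B2 x : hpartition H P -> B1 \in P -> B2 \in P ->
  x \in carrier B1 -> x \in carrier B2 -> B1 = B2.
Proof.
move=> [_ hd] B1P B2P xB1 xB2; apply/eqP; apply: contraTT isT => neB.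
by rewrite (disjointFr (hd _ _ B1P B2P neB) xB1) in xB2.
Qed.

Lemma hpartition_of_cover H P : hypergraph H -> cover P = H -> set0 \notin P ->
  (forall B1 B2, B1 \in P -> B2 \in P -> B1 != B2 -> [disjoint carrier B1 & carrier B2]) ->
  hpartition H P.
Proof.
move=> hH coverP P0 hd; split => //; apply/and3P; split => //; first exact/eqP.
apply/trivIsetP => B1 B2 B1P B2P neB; rewrite -setI_eq0; apply/set0Pn => -[X].
rewrite inE => /andP [XB1 XB2].
have /set0Pn [x xX] : X != set0.
  by apply: contraNneq hH => <-; rewrite -coverP; apply/bigcupP; exists B1.
have := disjointFr (hd _ _ B1P B2P neB) (subsetP (sub_carrier XB1) x xX).
by rewrite (subsetP (sub_carrier XB2) x xX).
Qed.

Lemma hpartition1 H : hypergraph H -> H != set0 -> hpartition H [set H].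
Proof.
move=> hH nH; apply: hpartition_of_cover; rewrite ?cover1 ?inE 1?eq_sym //.
by move=> B1 B2; rewrite !inE => /eqP -> /eqP ->; rewrite eqxx.
Qed.

Lemma connected_set0 : connected (set0 : {set {set T}}).
Proof.
exists set0; split.
  apply: hpartition_of_cover; rewrite /hypergraph /cover ?in_set0 ?big_set0 //.
  by move=> B1; rewrite in_set0.
move=> Q hQ; apply/setP => B; rewrite in_set0; apply/negbTE; apply: contra (hpartition_set0 hQ).
by move=> BQ; have := hpartition_block_sub hQ BQ; rewrite subset0 => /eqP <-.
Qed.

Lemma carrier_in_connected H : hypergraph H -> carrier H \in H -> connected H.
Proof.
move=> hH CH; have nH : H != set0 by apply/set0Pn; exists (carrier H).
exists [set H]; split; first exact: hpartition1.
move=> Q hQ; have [B BQ CB] : exists2 B, B \in Q & carrier H \in B.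
  by apply/bigcupP; rewrite -/(cover Q) (hpartition_cover hQ).
suff eQ : Q = [set B] by move: (hpartition_cover hQ); rewrite eQ cover1 => ->.
apply/setP => B'; rewrite inE; apply/idP/eqP => [B'Q | -> //].
have /set0Pn [X XB'] : B' != set0 by apply: contraNneq (hpartition_set0 hQ) => <-.
have XH : X \in H := subsetP (hpartition_block_sub hQ B'Q) X XB'.
have /set0Pn [x xX] : X != set0 by apply: contraNneq hH => <-.
apply: (hpartition_block_eq hQ B'Q BQ (x := x)); first exact: subsetP (sub_carrier XB') x xX.
exact: subsetP (sub_carrier CB) x (subsetP (sub_carrier XH) x xX).
Qed.

Lemma connected_hpartition_eq H P Q :
  connected H -> hpartition H P -> hpartition H Q -> P = Q.
Proof. by move=> [R [_ uR]] /uR -> /uR ->. Qed.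

Lemma connected_split H H1 H2 : hypergraph H -> connected H -> H1 :|: H2 = H ->
  [disjoint carrier H1 & carrier H2] -> H1 = set0 \/ H2 = set0.
Proof.
move=> hH cH eH d12.
have [-> | nz1] := eqVneq H1 set0; first by left.
have [-> | nz2] := eqVneq H2 set0; first by right.
have nH : H != set0 by rewrite -eH setU_eq0 negb_and nz1.
have hQ : hpartition H [set H1; H2].
  apply: hpartition_of_cover => //.
  - by rewrite -eH /cover bigcup_setU !big_set1.
  - by rewrite in_set2 negb_or ![set0 == _]eq_sym nz1 nz2.
  move=> B1 B2; rewrite !in_set2 => /orP [] /eqP -> /orP [] /eqP ->;
    by rewrite ?eqxx // disjoint_sym.
have := set21 H1 H2; have := set22 H1 H2.
rewrite (connected_hpartition_eq cH hQ (hpartition1 hH nH)) !inE => /eqP e2 /eqP e1.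
move: d12; rewrite e1 e2 -setI_eq0 setIid carrier_eq0 //.
by rewrite (negbTE nH).
Qed.

Lemma saturated_connected_carrier H :
  hypergraph H -> saturated H -> connected H -> H != set0 -> carrier H \in H.
Proof.
move=> hH sH cH /set0Pn [X0 X0H].
(* A largest member M absorbs every member meeting it, by saturation. *)
have [M MH maxM] := @arg_maxnP _ X0 (mem H) (fun X : {set T} => #|X|) X0H.
have inM X : X \in H -> X :&: M != set0 -> X \subset M.
  move=> XH nz; have XMH := sH _ _ XH MH nz.
  have /eqP -> : M == X :|: M by rewrite eqEcard subsetUr; exact: maxM.
  exact: subsetUl.
pose S := [set X : {set T} | X \subset M].
have [H1_0 | H2_0] : H :&: S = set0 \/ H :\: S = set0.
- apply: (connected_split hH cH (setID H S)).
  rewrite -setI_eq0; apply/set0Pn => -[x]; rewrite inE.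
  move=> /andP [/carrierP [X1 + xX1] /carrierP [X2 + xX2]].
  rewrite !inE => /andP [_ X1M] /andP [/negP X2M X2H]; apply: X2M; rewrite inM //.
  by apply/set0Pn; exists x; rewrite inE xX2 (subsetP X1M).
- by have := in_set0 M; rewrite -H1_0 !inE subxx andbT => /negbT /negP [].
suff -> : carrier H = M by [].
apply/eqP; rewrite eqEsubset sub_carrier // andbT; apply/bigcupsP => X XH.
by have := in_set0 X; rewrite -H2_0 !inE XH andbT => /negbT; rewrite negbK.
Qed.

Lemma trace_connected Z H : hypergraph H -> saturated H -> connected H ->
  connected (trace Z H).
Proof.
move=> hH sH cH; have [-> | ] := eqVneq (trace Z H) set0; first exact: connected_set0.
move=> /set0Pn [_ /traceP [X XH [/set0Pn [y yXZ] _]]].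
apply: carrier_in_connected; first exact: trace_hypergraph.
have nH : H != set0 by apply/set0Pn; exists X.
rewrite carrier_trace; apply/traceP; exists (carrier H); first exact: saturated_connected_carrier.
split => //; apply/set0Pn; exists y; move: yXZ; rewrite !inE => /andP [yX ->].
by rewrite (subsetP (sub_carrier XH)).
Qed.

Lemma hpartition_block_saturated H P B :
  saturated H -> hpartition H P -> B \in P -> saturated B.
Proof.
move=> sH hP BP X1 X2 X1B X2B nz; have /set0Pn [y] := nz; rewrite inE => /andP [yX1 _].
have BH := subsetP (hpartition_block_sub hP BP).
have : X1 :|: X2 \in cover P by rewrite (hpartition_cover hP); apply: sH; rewrite ?BH.
case/bigcupP => B' B'P UB'; rewrite (hpartition_block_eq hP BP B'P (x := y)) //.
  exact: subsetP (sub_carrier X1B) y yX1.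
by apply: (subsetP (sub_carrier UB')); rewrite inE yX1.
Qed.

Lemma hpartition_trace Z H P : hpartition H P ->
  hpartition (trace Z H) (trace Z @: [set B in P | trace Z B != set0]).
Proof.
move=> hP; apply: hpartition_of_cover; first exact: trace_hypergraph.
- rewrite cover_imset (@bigcup_setId _ _ P (fun B => trace Z B != set0)).
    by rewrite -trace_bigcup -/(cover P) (hpartition_cover hP).
  by move=> B _ /negbNE /eqP.
- by apply/imsetP => -[B]; rewrite inE => /andP [_ +] e; rewrite -e eqxx.
move=> _ _ /imsetP [B1 + ->] /imsetP [B2 + ->]; rewrite !inE => /andP [B1P _] /andP [B2P _] neB.
rewrite !carrier_trace; apply: disjointWl (subsetIl _ _) (disjointWr (subsetIl _ _) _).
by case: hP => _; apply; rewrite // (contraNneq _ neB) // => ->.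
Qed.

Lemma hpartition_trace_inj Z H P : hpartition H P ->
  {in [set B in P | trace Z B != set0] &, injective (trace Z)}.
Proof.
move=> hP B1 B2; rewrite !inE => /andP [B1P /set0Pn [W WB1]] /andP [B2P _] eB.
move: (WB1); rewrite eB => /traceP [X2 X2B [_ eW2]].
case/traceP: WB1 => X1 X1B [/set0Pn [y yX1Z] eW1].
apply: (hpartition_block_eq hP B1P B2P (x := y)).
  by apply: (subsetP (sub_carrier X1B)); move: yX1Z; rewrite inE => /andP [].
by apply: (subsetP (sub_carrier X2B)); move: yX1Z; rewrite -eW1 eW2 inE => /andP [].
Qed.

Lemma construction_hypergraph H K : construction H K -> hypergraph K.
Proof.
move=> cK; elim: cK => {H K} [|H x K _ _ nC _ _ _ hK | H P f _ _ _ _ _ _ hf].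
- by rewrite /hypergraph in_set0.
- by rewrite /hypergraph in_setU in_set1 negb_or hK eq_sym.
by apply/bigcupP => -[B BP]; apply/negP; exact: hf.
Qed.

Lemma construction_sub_carrier H K : construction H K -> carrier K \subset carrier H.
Proof.
move=> cK; elim: cK => {H K} [|H x K _ _ _ _ _ _ sK | H P f _ _ _ [hP _] _ _ sf].
- by rewrite /carrier /cover big_set0.
- apply/bigcupsP => X; rewrite in_setU in_set1 => /orP [XK | /eqP -> //].
  apply: subset_trans (sub_carrier XK) (subset_trans sK _).
  exact: subset_trans (carrier_restr _ _) (subD1set _ _).
apply/bigcupsP => X /bigcupP [B BP XfB]; apply: subset_trans (sub_carrier XfB) _.
exact: subset_trans (sf B BP) (carrierS (hpartition_block_sub hP BP)).
Qed.

Lemma trace_construction_eq0 Z H K :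
  construction H K -> trace Z H = set0 -> trace Z K = set0.
Proof.
move=> cK /eqP; rewrite !trace_eq0 => dHZ; apply/eqP; rewrite trace_eq0.
exact: disjointWl (construction_sub_carrier cK) dHZ.
Qed.

Lemma construction_bigcup H P (g : {set {set T}} -> {set {set T}}) :
  hypergraph H -> atomic H -> hpartition H P -> (forall B, B \in P -> connected B) ->
  (forall B, B \in P -> construction B (g B)) ->
  construction H (\bigcup_(B in P) g B).
Proof.
move=> hH aH hP cP gP; have coverP := hpartition_cover hP.
(* Rule (2) needs two blocks; with one block H is that block, with none H is empty. *)
have [lt1P | le1P] := ltnP 1 #|P|.
  apply: (constr_disc hH aH _ (conj hP cP) lt1P gP) => cH.
  have nH : H != set0.
    have /card_gt0P [B BP] : 0 < #|P| by apply: ltnW.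
    have /set0Pn [X XB] : B != set0 by apply: contraNneq (hpartition_set0 hP) => <-.
    by apply/set0Pn; exists X; apply: subsetP (hpartition_block_sub hP BP) X XB.
  by move: lt1P; rewrite (connected_hpartition_eq cH hP (hpartition1 hH nH)) cards1.
move: le1P; rewrite leq_eqVlt ltnS leqn0 => /orP [/cards1P [B eP] | /eqP /cards0_eq eP].
  by move: coverP; rewrite eP cover1 big_set1 => <-; apply: gP; rewrite eP set11.
by move: coverP; rewrite eP /cover !big_set0 => <-; exact: constr_empty.
Qed.

Lemma construction_bigcup_inj (I : finType) H (D : {set I}) (phi : I -> {set {set T}})
    (g : I -> {set {set T}}) :
  hypergraph H -> atomic H -> {in D &, injective phi} -> hpartition H (phi @: D) ->
  (forall i, i \in D -> connected (phi i)) ->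
  (forall i, i \in D -> construction (phi i) (g i)) ->
  construction H (\bigcup_(i in D) g i).
Proof.
move=> hH aH phi_inj hP cD gD; rewrite (partition_big_imset phi) /=.
apply: construction_bigcup => // _ /imsetP [i iD ->]; first exact: cD.
rewrite (big_pred1 i); first exact: gD.
move=> j; apply/andP/eqP => [[jD /eqP]| ->]; last by rewrite iD.
exact: phi_inj.
Qed.

Lemma setI_setD_sub A C Y Z : A \subset C -> C :&: Z = C :\: Y -> A :&: Z = A :\: Y.
Proof. by move=> sAC CZ; rewrite -(setIidPl sAC) -setIA CZ setIDA. Qed.

Lemma hpartition_other_block_sub H P B0 B Y Z :
  hpartition H P -> B0 \in P -> B \in P -> B != B0 -> Y \subset carrier B0 ->
  carrier H :&: Z = carrier H :\: Y -> carrier B \subset Z.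
Proof.
move=> hP B0P BP neB YB0 CZ; apply/setIidPl.
rewrite (setI_setD_sub (carrierS (hpartition_block_sub hP BP)) CZ); apply/setDidPl.
by case: hP => _ hd; exact: disjointWr YB0 (hd _ _ BP B0P neB).
Qed.

Lemma trace_construction_conn H x K Y Z :
  hypergraph H -> atomic H -> connected H -> saturated H -> x \in carrier H ->
  construction (restr H (carrier H :\ x)) K -> Y \in K ->
  carrier H :&: Z = carrier H :\: Y ->
  construction (trace Z (restr H (carrier H :\ x))) (trace Z K) ->
  construction (trace Z H) (trace Z (K :|: [set carrier H])).
Proof.
move=> hH aH cH sH xC cK YK CZ cTK.
have xY : x \notin Y.
  apply/negP => /(subsetP (sub_carrier YK))/(subsetP (construction_sub_carrier cK)).
  by move/(subsetP (carrier_restr _ _)); rewrite !inE eqxx.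
have xZ : x \in Z by move/setP/(_ x): CZ; rewrite !inE xC (negbTE xY) /= => ->.
have xHZ : x \in carrier (trace Z H) by rewrite carrier_trace inE xC.
have CZ0 : carrier H :&: Z != set0 by apply/set0Pn; exists x; rewrite -carrier_trace.
rewrite traceU (trace_set1 CZ0) -carrier_trace.
apply: (constr_conn (x := x)) => //; rewrite -?trace_restrD1 //.
- exact: trace_hypergraph.
- exact: trace_atomic.
- by apply/set0Pn; exists x.
exact: trace_connected.
Qed.

Lemma trace_construction_disc H P f B0 Y Z :
  hypergraph H -> atomic H -> saturated H -> finest_hpartition H P ->
  (forall B, B \in P -> construction B (f B)) -> B0 \in P -> Y \in f B0 ->
  carrier H :&: Z = carrier H :\: Y ->
  construction (trace Z B0) (trace Z (f B0)) ->
  construction (trace Z H) (trace Z (\bigcup_(B in P) f B)).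
Proof.
move=> hH aH sH [hP cP] cf B0P YfB0 CZ cTB0.
have YB0 : Y \subset carrier B0.
  exact: subset_trans (sub_carrier YfB0) (construction_sub_carrier (cf B0 B0P)).
rewrite trace_bigcup -(@bigcup_setId _ _ P (fun B => trace Z B != set0)); last first.
  by move=> B BP /negbNE /eqP; apply: trace_construction_eq0; exact: cf.
apply: (construction_bigcup_inj (phi := trace Z)).
- exact: trace_hypergraph.
- exact: trace_atomic.
- exact: hpartition_trace_inj hP.
- exact: hpartition_trace hP.
- move=> B; rewrite inE => /andP [BP _]; apply: trace_connected.
  + exact: hpartition_block_hypergraph hH hP BP.
  + exact: hpartition_block_saturated sH hP BP.
  + exact: cP.
move=> B; rewrite inE => /andP [BP _].
have [-> // | neB] := eqVneq B B0.
have BZ := hpartition_other_block_sub hP B0P BP neB YB0 CZ.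
have hB := hpartition_block_hypergraph hH hP BP.
rewrite !trace_id //; first exact: cf.
- exact: construction_hypergraph (cf B BP).
exact: subset_trans (construction_sub_carrier (cf B BP)) BZ.
Qed.

(* Z is arbitrary subject to agreeing with carrier H :\: Y on carrier H, so that the
   statement restricts to the subhypergraphs met in the induction. *)
Lemma trace_construction H L Y Z :
  construction H L -> saturated H -> Y \in L ->
  carrier H :&: Z = carrier H :\: Y ->
  construction (trace Z H) (trace Z L).
Proof.
move=> cL; elim: cL Y Z => {H L} [|H x K hH aH nC cH xC cK IH | H P f hH aH _ fP _ cf IH] Y Z sH.
- by rewrite in_set0.
- rewrite in_setU in_set1 => /orP [YK | /eqP ->] CZ.
    have CZ' := setI_setD_sub (subset_trans (carrier_restr H _) (subD1set _ x)) CZ.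
    exact: trace_construction_conn hH aH cH sH xC cK YK CZ (IH _ _ (restr_saturated sH) YK CZ').
  have tH0 : trace Z H = set0 by apply/eqP; rewrite trace_eq0 -setI_eq0 CZ setDv.
  by rewrite tH0 (trace_construction_eq0 (constr_conn hH aH nC cH xC cK) tH0); exact: constr_empty.
move=> /bigcupP [B0 B0P YfB0] CZ.
have [hP _] := fP; have sB0 := carrierS (hpartition_block_sub hP B0P).
have sB0H := hpartition_block_saturated sH hP B0P.
have cTB0 := IH _ B0P _ _ sB0H YfB0 (setI_setD_sub sB0 CZ).
exact: trace_construction_disc hH aH sH fP cf B0P YfB0 CZ cTB0.
Qed.

End Hypergraphs.

Theorem proposition7p4 (T : finType) (H L : {set {set T}}) (Y : {set T}) :
  ASC H -> construction H L -> Y \in L ->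
  ASC (trace (carrier H :\: Y) H) /\
  construction (trace (carrier H :\: Y) H) (trace (carrier H :\: Y) L).
Proof.
move=> [hH aH sH cH] cL YL; split.
  split; first exact: trace_hypergraph.
  - exact: trace_atomic.
  - exact: trace_saturated.
  exact: trace_connected.
by apply: trace_construction cL sH YL _; apply/setIidPr/subsetDl.
Qed.
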